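(* For all non-negative integers $m$ and $n$, $$\sum_{k=1}^nH_k\sum_{j=m}^k\binom{k-1}{j-1}\frac{s(j,m)}{j!}=\frac{1}{m!}H_n(m)H_n-\frac{1}{m!}\sum_{k=1}^n\frac{H_{k-1}(m)}{k}.$$
   Context: For integers $m\ge 1$, $n\ge 0$, the multiple harmonic-like numbers are $H_n(m)=\sum_{1\le k_1+k_2+\cdots+k_m\le n}\frac{1}{k_1k_2\cdots k_m}$ (sum over positive integers $k_1,\dots,k_m$), with $H_n(0)=1$ for $n\ge 0$ and $H_0(m)=0$ for $m\ge1$. $H_n=H_n(1)=\sum_{k=1}^n\frac1k$. The (signed) Stirling numbers of the first kind $s(n,k)$ are defined by $\sum_{n\ge k}s(n,k)\frac{z^n}{n!}=\frac{\ln^k(1+z)}{k!}$, with $s(n,k)=0$ for $n<k$. Binomial coefficients with negative lower index are $0$. *)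

From HB Require Import structures.
From mathcomp Require Import all_boot all_order all_algebra.
Set Implicit Arguments. Unset Strict Implicit. Unset Printing Implicit Defensive.
Import Order.TTheory GRing.Theory Num.Theory.
Local Open Scope ring_scope.

(* Signed Stirling numbers of the first kind s(n,k), via the standard
   recurrence s(n+1,k+1) = s(n,k) - n s(n,k+1), s(0,0)=1, s(0,k+1)=s(n+1,0)=0,
   which is equivalent to the generating function
   sum_{n>=k} s(n,k) z^n/n! = ln^k(1+z)/k!. *)
Fixpoint stirling1 (n k : nat) : int :=
  match n, k with
  | 0, 0 => 1
  | 0, _.+1 => 0
  | _.+1, 0 => 0
  | n'.+1, k'.+1 => stirling1 n' k' - (n'%:Z) * stirling1 n' k'.+1
  end.

Definition harm (n : nat) : rat := \sum_(1 <= k < n.+1) (k%:R)^-1.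

(* Multiple harmonic-like numbers
   H_n(m) = sum_{1 <= k_1+...+k_m <= n, k_i >= 1} 1/(k_1...k_m),
   with H_n(0) = 1. Each k_i is at most n, so tuples range over 'I_n.+1. *)
Definition mharm (n m : nat) : rat :=
  if m == 0%N then 1 else
  \sum_(t : m.-tuple 'I_n.+1 |
          [&& all (fun i : 'I_n.+1 => (0 < i)%N) t,
              (1 <= \sum_(i <- t) (i : nat))%N &
              (\sum_(i <- t) (i : nat) <= n)%N])
     (\prod_(i <- t) ((i : nat)%:R : rat))^-1.

(* Binomial coefficient binom(a, b) with integer lower index b = j - 1:
   zero when j = 0 (negative lower index). *)
Definition binom_m1 (a j : nat) : nat := if j == 0%N then 0%N else 'C(a, j.-1).

(* With the unsigned Lah numbers L(k,j) = C(k-1,j-1) k!/j!, the inner sum is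
   (1/k!) sum_j L(k,j) s(j,m), and this convolution is the unsigned Stirling
   number |s(k,m)|: both satisfy the recurrence c(k+1,m+1) = c(k,m) + k c(k,m+1).
   On the other side H_n(m) = [z^n] (-ln(1-z))^m/(1-z), so
   k! (H_k(m) - H_{k-1}(m)) = m! |s(k,m)|.  Without generating functions this
   follows from the recursion H_n(m+1) = sum_i H_{n-i}(m)/i (split off k_1 = i)
   and its consequence n H_n(m) = sum_(l<n) (H_l(m) + m H_l(m-1)), the
   coefficientwise form of the differential equation of (-ln(1-z))^m/(1-z).
   The theorem is then Abel summation of sum_k H_k (H_k(m) - H_{k-1}(m)) / m!. *)

From mathcomp Require Import all_boot all_order all_algebra.
From mathcomp Require Import zify ring.
Import Order.TTheory GRing.Theory Num.Theory.
Local Open Scope ring_scope.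

Lemma sum_rev_sub (V : nmodType) (G : nat -> V) n :
  \sum_(1 <= i < n.+1) G (n - i)%N = \sum_(0 <= l < n) G l.
Proof.
elim: n => [|n IHn]; first by rewrite !big_geq.
rewrite big_nat_recl // subSS subn0 [RHS]big_nat_recr //= -IHn addrC.
by congr (_ + _); apply: eq_bigr => i _; rewrite subSS.
Qed.

Lemma sum_partial_conv (R : pzSemiRingType) (f g : nat -> R) n :
  \sum_(0 <= q < n) \sum_(1 <= i < q.+1) f i * g (q - i)%N
  = \sum_(1 <= i < n.+1) f i * \sum_(0 <= l < n - i) g l.
Proof.
elim: n => [|n IHn]; first by rewrite !big_geq.
rewrite big_nat_recr //= IHn [RHS]big_nat_recr //= subnn.
rewrite [in f n.+1 * _]big_geq // mulr0 addr0.
rewrite -big_split /=; apply: eq_big_nat => i /andP[_ lein].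
by rewrite subSn // big_nat_recr //= mulrDr.
Qed.

Fixpoint lah (k j : nat) : nat :=
  match k, j with
  | 0, 0 => 1
  | 0, _.+1 | _.+1, 0 => 0
  | k'.+1, j'.+1 => lah k' j' + (k' + j'.+1) * lah k' j'.+1
  end.

Fixpoint stirling1u (n k : nat) : nat :=
  match n, k with
  | 0, 0 => 1
  | 0, _.+1 | _.+1, 0 => 0
  | n'.+1, k'.+1 => stirling1u n' k' + n' * stirling1u n' k'.+1
  end.

Lemma lah_small k j : (k < j)%N -> lah k j = 0%N.
Proof. by elim: k j => [|k IHk] [|j] //= ltkj; rewrite !IHk //; lia. Qed.

Lemma stirling1_small n k : (n < k)%N -> stirling1 n k = 0.
Proof.
by elim: n k => [|n IHn] [|k] //= ltnk; rewrite !IHn ?mulr0 ?subr0 //; lia.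
Qed.

Lemma lahSS k j : lah k.+1 j.+1 = (lah k j + (k + j.+1) * lah k j.+1)%N.
Proof. by []. Qed.

Lemma lah_fact k j : (lah k.+1 j.+1 * j.+1`! = 'C(k, j) * k.+1`!)%N.
Proof.
elim: k j => [|k IHk] [|j] //; first by rewrite lah_small ?bin_small.
  have := IHk 0%N; rewrite /= !muln1 !bin0 !mul1n => ->.
  by rewrite add0n addn1 [k.+2`!]factS.
rewrite lahSS mulnDl binS [k.+2`!]factS.
have -> : (lah k.+1 j.+1 * j.+2`! = j.+2 * ('C(k, j) * k.+1`!))%N.
  by rewrite factS mulnCA IHk.
rewrite -mulnA IHk !mulnA -mulnDl; congr (_ * _).
have := mul_bin_left k j.
case: (leqP j k) => [lejk|ltkj]; first by nia.
by rewrite !bin_small //; lia.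
Qed.

Lemma stirling1SS n k :
  stirling1 n.+1 k.+1 = stirling1 n k - n%:Z * stirling1 n k.+1.
Proof. by []. Qed.

Lemma stirling1uSS n k :
  stirling1u n.+1 k.+1 = (stirling1u n k + n * stirling1u n k.+1)%N.
Proof. by []. Qed.

Arguments lah : simpl never.
Arguments stirling1 : simpl never.
Arguments stirling1u : simpl never.

Lemma lah_stirling1 k m :
  \sum_(0 <= j < k.+1) (lah k j)%:Z * stirling1 j m = (stirling1u k m)%:Z.
Proof.
elim: k m => [|k IHk] [|m]; try by rewrite big_nat1.
  rewrite big_nat_recl // big1 => [|j _]; first by rewrite mul0r.
  by rewrite [stirling1 _ _]/= mulr0.
pose g j := ((k + j) * lah k j)%:Z * stirling1 j m.+1.
have shift : \sum_(0 <= j < k.+1) g j.+1 = \sum_(0 <= j < k.+1) g j.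
  have g0 : g 0%N = 0 by rewrite /g stirling1_small ?mulr0.
  have gk : g k.+1 = 0 by rewrite /g lah_small ?muln0 ?mul0r.
  transitivity (\sum_(0 <= j < k.+2) g j).
    by rewrite [RHS]big_nat_recl // g0 add0r.
  by rewrite [LHS]big_nat_recr //= gk addr0.
rewrite stirling1uSS PoszD PoszM -!IHk mulr_sumr -big_split /=.
rewrite big_nat_recl // mul0r add0r.
under eq_bigr do rewrite lahSS PoszD mulrDl.
rewrite big_split /= -/(\sum_(0 <= j < k.+1) g j.+1) shift -big_split /=.
apply: eq_bigr => j _; rewrite /g stirling1SS PoszM PoszD; ring.
Qed.

Fixpoint mharm_rec (m n : nat) : rat :=
  if m is m'.+1 then \sum_(1 <= i < n.+1) mharm_rec m' (n - i) / i%:R else 1.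

Lemma mharm_rec0 n : mharm_rec 0 n = 1.
Proof. by []. Qed.

Lemma mharm_recS m n :
  mharm_rec m.+1 n = \sum_(1 <= i < n.+1) mharm_rec m (n - i) / i%:R.
Proof. by []. Qed.

Arguments mharm_rec : simpl never.

Lemma mharm_rec_at0 m : mharm_rec m 0 = (m == 0%N)%:R.
Proof. by case: m => [|m] //; rewrite mharm_recS big_geq. Qed.

Definition mharm_tuple (N m n : nat) : rat :=
  \sum_(t : m.-tuple 'I_N | all (fun i : 'I_N => (0 < i)%N) t
                            && (\sum_(i <- t) (i : nat) <= n)%N)
     (\prod_(i <- t) (i : nat)%:R)^-1.

Lemma mharm_tuple0 N n : mharm_tuple N 0 n = 1.
Proof.
rewrite /mharm_tuple (big_pred1 [tuple]) => [|t]; first by rewrite big_nil invr1.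
by rewrite tuple0 /= big_nil eqxx.
Qed.

Lemma mharm_tupleS N m n :
  mharm_tuple N m.+1 n
  = \sum_(i : 'I_N | (0 < i <= n)%N) (i : nat)%:R^-1 * mharm_tuple N m (n - i).
Proof.
rewrite /mharm_tuple.
rewrite (reindex (fun p : 'I_N * m.-tuple 'I_N => [tuple of p.1 :: p.2])) /=; last first.
  exists (fun t : m.+1.-tuple 'I_N => (thead t, [tuple of behead t])).
    by move=> [x t] _ /=; congr (_, _); apply: val_inj.
  by move=> t _; case/tupleP: t => x t; apply: val_inj.
rewrite (eq_big (fun p : 'I_N * m.-tuple 'I_N => (0 < p.1 <= n)%N &&
     (all (fun i : 'I_N => (0 < i)%N) p.2 && (\sum_(i <- p.2) (i : nat) <= n - p.1)%N))
   (fun p : 'I_N * m.-tuple 'I_N =>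
      (p.1 : nat)%:R^-1 * (\prod_(i <- p.2) (i : nat)%:R)^-1)).
- rewrite -(pair_big_dep (fun i : 'I_N => (0 < i <= n)%N)
    (fun i (t : m.-tuple 'I_N) =>
       all (fun j : 'I_N => (0 < j)%N) t && (\sum_(j <- t) (j : nat) <= n - i)%N)
    (fun (i : 'I_N) (t : m.-tuple 'I_N) =>
       (i : nat)%:R^-1 * (\prod_(j <- t) (j : nat)%:R)^-1)).
  by apply: eq_bigr => i _; rewrite mulr_sumr.
- move=> [x t] /=; rewrite big_cons.
  case: (0 < x)%N; case: (all _ t); rewrite /= ?andbF //.
  case: (leqP x n) => [lexn|ltnx]; first by rewrite leq_subRL.
  by apply/negbTE; rewrite -ltnNge (leq_trans ltnx (leq_addr _ _)).
- by move=> [x t] /= _; rewrite big_cons invfM.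
Qed.

Lemma mharm_tuple_rec N m n : (n < N)%N -> mharm_tuple N m n = mharm_rec m n.
Proof.
elim: m n => [|m IHm] n ltnN; first by rewrite mharm_tuple0.
rewrite mharm_tupleS mharm_recS.
under eq_bigr => i _ do rewrite IHm ?(leq_ltn_trans (leq_subr _ _) ltnN) // mulrC.
rewrite -(big_mkord (fun i => 0 < i <= n)%N (fun i => mharm_rec m (n - i) / i%:R)).
rewrite -(big_nat_widen _ _ _ (fun i => 0 < i)%N _ ltnN).
by rewrite (big_nat_widenl _ _ _ _ _ (leq0n 1)).
Qed.

Lemma mharmE n m : mharm n m = mharm_rec m n.
Proof.
case: m => [|m] //; rewrite /mharm /= -(mharm_tuple_rec _ m.+1 _ (ltnSn n)).
apply: eq_bigl => t; case/tupleP: t => x t; rewrite big_cons /=.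
by case: x => [[|x] ltxn].
Qed.

Lemma mulr_mharm_rec m n :
  n%:R * mharm_rec m n
  = \sum_(0 <= l < n) (mharm_rec m l + m%:R * mharm_rec m.-1 l).
Proof.
elim: m n => [|m IHm] n.
  under eq_bigr do rewrite mul0r addr0 mharm_rec0.
  by rewrite sumr_const_nat subn0 mharm_rec0 mulr1.
have conv q :
    \sum_(1 <= i < q.+1)
       i%:R^-1 * (mharm_rec m (q - i) + m%:R * mharm_rec m.-1 (q - i))
    = mharm_rec m.+1 q + m%:R * mharm_rec m q.
  under eq_bigr do rewrite mulrDr.
  rewrite big_split /= mharm_recS; congr (_ + _).
    by apply: eq_bigr => i _; rewrite mulrC.
  case: m {IHm} => [|m]; first by rewrite mulr0n mul0r big1 // => i _; rewrite mulr0.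
  by rewrite [mharm_rec m.+1 q]mharm_recS mulr_sumr; apply: eq_bigr => i _; ring.
have split i : (1 <= i < n.+1)%N -> n%:R * (mharm_rec m (n - i) / i%:R)
    = mharm_rec m (n - i) + i%:R^-1 * ((n - i)%N%:R * mharm_rec m (n - i)).
  move=> /andP[lt0i]; rewrite ltnS => lein; rewrite -{1}(subnKC lein) natrD.
  by field; rewrite pnatr_eq0 -lt0n.
rewrite mharm_recS mulr_sumr (eq_big_nat _ _ split) big_split /= sum_rev_sub.
under eq_bigr do rewrite IHm.
rewrite -sum_partial_conv -big_split /=.
by apply: eq_bigr => q _; rewrite conv mulrSr; ring.
Qed.

Lemma mharm_rec_diff m n :
  n.+1%:R * (mharm_rec m n.+1 - mharm_rec m n) = m%:R * mharm_rec m.-1 n.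
Proof.
rewrite mulrBr mulr_mharm_rec big_nat_recr //= -mulr_mharm_rec mulrSr; ring.
Qed.

Lemma fact_mharm_rec_diff m k :
  k.+1`!%:R * (mharm_rec m k.+1 - mharm_rec m k) = m`!%:R * (stirling1u k.+1 m)%:R.
Proof.
elim: k m => [|k IHk] m.
  rewrite -[1`!%:R]/(0.+1%:R) mharm_rec_diff mharm_rec_at0.
  by case: m => [|[|m]]; rewrite ?mul0r ?mulr0 ?mul1r ?mulr1.
case: m => [|m]; first by rewrite !mharm_rec0 subrr mulr0.
have -> : k.+2`!%:R * (mharm_rec m.+1 k.+2 - mharm_rec m.+1 k.+1)
    = k.+1`!%:R * (m.+1%:R * mharm_rec m k.+1).
  by rewrite -(mharm_rec_diff m.+1 k.+1) factS natrM; ring.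
rewrite stirling1uSS natrD natrM mulrDr [X in _ = _ + X]mulrCA -IHk.
rewrite [m.+1`!]factS natrM -mulrA -IHk.
transitivity (k.+1`!%:R * (m.+1%:R * (mharm_rec m k.+1 - mharm_rec m k)
    + k.+1%:R * (mharm_rec m.+1 k.+1 - mharm_rec m.+1 k))); last by ring.
by rewrite mharm_rec_diff; ring.
Qed.

Lemma sum_binom_stirling1 k m :
  \sum_(m <= j < k.+2) ((binom_m1 k j)%:R * ((stirling1 j m)%:~R : rat) / j`!%:R)
  = (mharm_rec m k.+1 - mharm_rec m k) / m`!%:R.
Proof.
have fact_neq0 n : (n`!%:R : rat) != 0 by rewrite pnatr_eq0 -lt0n fact_gt0.
have binom_lah j : (binom_m1 k j)%:R / j`!%:R = (lah k.+1 j)%:R / k.+1`!%:R :> rat.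
  apply/eqP; rewrite eqr_div ?fact_neq0 // -!natrM eqr_nat.
  by case: j => [|j]; rewrite ?muln0 ?mul0n // lah_fact.
rewrite (big_nat_widenl _ _ _ _ _ (leq0n m)) big_mkcondr /=.
transitivity
  ((\sum_(0 <= j < k.+2) (lah k.+1 j)%:Z * stirling1 j m)%:~R / k.+1`!%:R : rat).
  rewrite rmorph_sum mulr_suml; apply: eq_bigr => j _.
  case: leqP => [_|ltjm]; last by rewrite stirling1_small // mulr0 mul0r.
  by rewrite mulrAC binom_lah rmorphM /= mulrAC.
apply/eqP; rewrite lah_stirling1 eqr_div ?fact_neq0 //.
by rewrite [X in X == _]mulrC -fact_mharm_rec_diff mulrC.
Qed.

Lemma harmS n : harm n.+1 = harm n + n.+1%:R^-1.
Proof. by rewrite /harm big_nat_recr. Qed.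

Lemma sum_harm_mul_diff (r : nat -> rat) n :
  \sum_(1 <= k < n.+1) harm k * (r k - r k.-1)
  = r n * harm n - \sum_(1 <= k < n.+1) r k.-1 / k%:R.
Proof.
elim: n => [|n IHn]; first by rewrite !big_geq // /harm big_geq // mulr0 subr0.
by rewrite big_nat_recr //= IHn [in RHS]big_nat_recr //= harmS; ring.
Qed.

Theorem theorem6 (m n : nat) :
  \sum_(1 <= k < n.+1)
     harm k * \sum_(m <= j < k.+1)
        ((binom_m1 k.-1 j)%:R * ((stirling1 j m)%:~R : rat) / (j`!)%:R)
  = ((m`!)%:R)^-1 * mharm n m * harm n
    - ((m`!)%:R)^-1 * \sum_(1 <= k < n.+1) mharm k.-1 m / k%:R.
Proof.
under [in RHS]eq_bigr do rewrite mharmE.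
rewrite mharmE -mulrA -mulrBr -sum_harm_mul_diff mulr_sumr.
apply: eq_big_nat => -[|k] // _.
by rewrite sum_binom_stirling1 mulrA mulrC.
Qed.
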